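(* Let $n\ge1$ and consider the $n\times3$ grid graph (vertices at the intersections of $n$ rows and $3$ columns, adjacent iff they are consecutive in the same row or the same column), with vertices ordered row-wise starting from the top row: the vertex in row $a$ and column $b$ receives label $3(a-1)+b$. Then this ordered grid is Generalized Bartlett, i.e., the row-wise ordering is a Generalized Bartlett ordering of the grid.
   Context: For a graph $(V,E)$ with $|V|=p$ and ordering $\sigma:V\to\{1,\dots,p\}$, set $E^\sigma_0=E$, $E^\sigma_i=E^\sigma_{i-1}\cup\{\{u,v\}:u\ne v,\sigma(u)>i,\sigma(v)>i,\{u,\sigma^{-1}(i)\},\{v,\sigma^{-1}(i)\}\in E^\sigma_{i-1}\}$ for $i=1,\dots,p-2$, and $D^\sigma(E)=E^\sigma_{p-2}$. $\sigma$ is a Generalized Bartlett ordering if there are no $u,v,w$ with $\{u,v\},\{v,w\},\{u,w\}\notin E$ but all three in $D^\sigma(E)$; the graph is Generalized Bartlett if such an ordering exists. *)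

From mathcomp Require Import all_boot.
Set Implicit Arguments. Unset Strict Implicit. Unset Printing Implicit Defensive.

Definition simple_graph (V : finType) (E : rel V) :=
  symmetric E /\ irreflexive E.

Definition is_ordering (V : finType) (sigma : V -> nat) :=
  injective sigma /\ forall v, 1 <= sigma v <= #|V|.

Fixpoint fill (V : finType) (E : rel V) (sigma : V -> nat) (i : nat) : rel V :=
  match i with
  | 0 => E
  | i'.+1 =>
      let Ep := fill E sigma i' in
      fun u v => Ep u v ||
        [&& u != v, i'.+1 < sigma u, i'.+1 < sigma v &
            [exists w, [&& sigma w == i'.+1, Ep u w & Ep v w]]]
  end.

Definition Dfill (V : finType) (E : rel V) (sigma : V -> nat) : rel V :=
  fill E sigma (#|V| - 2).

Definition GB_ordering (V : finType) (E : rel V) (sigma : V -> nat) : Prop :=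
  is_ordering sigma /\
  ~ (exists u v w : V,
       [/\ ~~ E u v, ~~ E v w, ~~ E u w &
           [/\ Dfill E sigma u v, Dfill E sigma v w & Dfill E sigma u w]]).

(* The n x 3 grid, 0-indexed: vertex (a, b), a : 'I_n row, b : 'I_3 column. *)
Definition grid_adj (n : nat) : rel ('I_n * 'I_3) :=
  fun x y =>
    ((x.1 == y.1) && ((x.2.+1 == y.2 :> nat) || (y.2.+1 == x.2 :> nat))) ||
    ((x.2 == y.2) && ((x.1.+1 == y.1 :> nat) || (y.1.+1 == x.1 :> nat))).

(* Row-wise label: row a+1, column b+1 gets 3a + (b+1). *)
Definition grid_rowwise (n : nat) : 'I_n * 'I_3 -> nat :=
  fun x => 3 * x.1 + x.2 + 1.

From mathcomp Require Import all_boot.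
From mathcomp Require Import zify.

Set Implicit Arguments.
Unset Strict Implicit.
Unset Printing Implicit Defensive.

(* The row-wise ordering of the n x 3 grid has bandwidth 3: adjacent vertices
   have labels at most 3 apart.  Elimination never increases the bandwidth of
   an ordering, since a fill edge {u, v} created by eliminating w joins two
   later neighbours of w, whose labels both lie in (sigma w, sigma w + 3].
   Hence any three vertices pairwise joined in D(E) have distinct labels inside
   a window of four consecutive labels, and a check of the column patterns of
   such a window shows that two of them are adjacent in the grid. *)

Section Fill.

Variables (V : finType) (E : rel V) (sigma : V -> nat).

Lemma fill_ind (P : rel V) :
  (forall u v, E u v -> P u v) ->
  (forall u v w, sigma w < sigma u -> sigma w < sigma v -> u != v ->
     P u w -> P v w -> P u v) ->
  forall i u v, fill E sigma i u v -> P u v.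
Proof.
move=> PE Pfill; elim=> [|i IH] u v //=; first exact: PE.
case/orP; first exact: IH.
case/and4P=> neq_uv ltu ltv /existsP[w /and3P[/eqP sw Euw Evw]].
by apply: (Pfill u v w); rewrite ?sw // ?IH.
Qed.

Lemma fill_irrefl i : irreflexive E -> irreflexive (fill E sigma i).
Proof.
move=> irrE u; apply/negP => Duu.
have: u != u; last by rewrite eqxx.
apply: (@fill_ind [rel x y | x != y] _ _ i u u Duu) => // x y.
by apply: contraTneq => ->; rewrite irrE.
Qed.

Definition near (k : nat) : rel V :=
  fun u v => (sigma u <= sigma v + k) && (sigma v <= sigma u + k).

Lemma fill_near k i :
  (forall u v, E u v -> near k u v) -> forall u v, fill E sigma i u v -> near k u v.
Proof.
move=> Enear; apply: (@fill_ind (near k)) => // u v w ltu ltv _.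
rewrite /near => /andP[hu _] /andP[hv _]; apply/andP; split; lia.
Qed.

End Fill.

Lemma grid_rowwise_inj n : injective (@grid_rowwise n).
Proof.
move=> [a b] [c d]; rewrite /grid_rowwise /= => eq_lab.
have ltb := ltn_ord b; have ltd := ltn_ord d.
by congr pair; apply: val_inj => /=; lia.
Qed.

Lemma grid_rowwise_ordering n : is_ordering (@grid_rowwise n).
Proof.
split=> [|[a b]]; first exact: grid_rowwise_inj.
rewrite card_prod !card_ord /grid_rowwise /=.
by have := ltn_ord a; have := ltn_ord b; lia.
Qed.

Lemma grid_adjE n (x y : 'I_n * 'I_3) : grid_adj x y =
  (((x.1 : nat) == y.1) && ((x.2.+1 == y.2 :> nat) || (y.2.+1 == x.2 :> nat))) ||
  (((x.2 : nat) == y.2) && ((x.1.+1 == y.1 :> nat) || (y.1.+1 == x.1 :> nat))).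
Proof. by []. Qed.

Lemma grid_adj_irrefl n : irreflexive (@grid_adj n).
Proof. by move=> x; rewrite grid_adjE; lia. Qed.

Lemma grid_adj_near n (u v : 'I_n * 'I_3) :
  grid_adj u v -> near (@grid_rowwise n) 3 u v.
Proof.
case: u v => [a b] [c d]; rewrite grid_adjE /near /grid_rowwise /=.
by have := ltn_ord b; have := ltn_ord d; lia.
Qed.

Lemma grid_near_triangle n (u v w : 'I_n * 'I_3) :
  u != v -> v != w -> u != w ->
  near (@grid_rowwise n) 3 u v -> near (@grid_rowwise n) 3 v w ->
  near (@grid_rowwise n) 3 u w ->
  [|| grid_adj u v, grid_adj v w | grid_adj u w].
Proof.
rewrite -!(inj_eq (@grid_rowwise_inj n)) /near !grid_adjE.
case: u v w => [a1 [[|[|[|?]]] ?]] [a2 [[|[|[|?]]] ?]] [a3 [[|[|[|?]]] ?]] //=;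
rewrite /grid_rowwise /= => *; lia.
Qed.

Theorem lemma10 (n : nat) (hn : 1 <= n) :
  GB_ordering (@grid_adj n) (@grid_rowwise n).
Proof.
split; first exact: grid_rowwise_ordering.
case=> u [v [w [nEuv nEvw nEuw [Duv Dvw Duw]]]].
have Dnear := fill_near (@grid_adj_near n).
have neq_of_D x y : Dfill (@grid_adj n) (@grid_rowwise n) x y -> x != y.
  by apply: contraTneq => ->; rewrite /Dfill (fill_irrefl _ _ (@grid_adj_irrefl n)).
have := grid_near_triangle (neq_of_D _ _ Duv) (neq_of_D _ _ Dvw) (neq_of_D _ _ Duw)
  (Dnear _ _ _ Duv) (Dnear _ _ _ Dvw) (Dnear _ _ _ Duw).
by rewrite (negbTE nEuv) (negbTE nEvw) (negbTE nEuw).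
Qed.
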